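(* Let $(J,R,\sigma)$ be a generalized complex structure of type $1$ on a real $4$-dimensional unimodular Lie algebra $\mathfrak g$. Then there exist a basis $(e_1,e_2,e_3,e_4)$ of $\mathfrak g$ and $\lambda\in\mathbb R$ such that $J=\lambda(E_{11}+E_{22})+E_{34}-E_{43}$, $R=e_{12}^\#$, $\sigma=(1+\lambda^2)e^{12}_\#$, and the nonvanishing Lie brackets have one of the following forms (all parameters real): $\mathfrak U_1$: $[e_1,e_2]=e_1$, $[e_2,e_3]=\tfrac12e_3-ye_4-q_1e_1$, $[e_2,e_4]=ye_3+\tfrac12e_4-q_2e_1$; $\mathfrak U_2$: $[e_3,e_4]=b_1e_1+b_2e_2$, $[e_2,e_3]=-ye_4-q_1e_1$, $[e_2,e_4]=ye_3-q_2e_1$; $\mathfrak U_3$: $[e_3,e_4]=b_1e_1+b_2e_2$, $[e_4,e_1]=pe_1+re_2$, $[e_4,e_2]=qe_1-pe_2$, with $|p^2+qr|\in\{0,1\}$.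
   Context: Let $\mathfrak g$ be a real finite-dimensional Lie algebra, $\Phi(\mathfrak g)=\mathfrak g\oplus\mathfrak g^*$ with the neutral pairing $\langle u+\alpha,v+\beta\rangle=\tfrac12(\alpha(v)+\beta(u))$ and the bracket $[u+\alpha,v+\beta]=[u,v]+\mathrm{ad}_u^t\beta-\mathrm{ad}_v^t\alpha$, where $(\mathrm{ad}_u^t\alpha)(v)=-\alpha([u,v])$. A generalized complex structure on $\mathfrak g$ is an endomorphism $K$ of $\Phi(\mathfrak g)$ with $K^2=-\mathrm{Id}$, $\langle Ka,b\rangle+\langle a,Kb\rangle=0$ for all $a,b$, and vanishing Nijenhuis torsion $N_K(a,b)=[Ka,Kb]-K[Ka,b]-K[a,Kb]+K^2[a,b]$. Writing $K=\begin{pmatrix}J&R\\ \sigma&-J^*\end{pmatrix}$ with skew-symmetric $R:\mathfrak g^*\to\mathfrak g$, $\sigma:\mathfrak g\to\mathfrak g^*$, the triple $(J,R,\sigma)$ is called a generalized complex structure on $\mathfrak g$; in dimension 4 it is of type $1$ if $\operatorname{rank}R=2$. A Lie algebra is unimodular if $\operatorname{tr}\mathrm{ad}_u=0$ for all $u$. Notation: $E_{ij}$ sends $e_j$ to $e_i$ and kills $e_k$, $k\neq j$; for $\pi\in\wedge^2\mathfrak g$, $\pi^\#:\mathfrak g^*\to\mathfrak g$ is $\beta(\pi^\#\alpha)=\pi(\alpha,\beta)$; for $\omega\in\wedge^2\mathfrak g^*$, $\omega_\#(u)=i_u\omega$; $e_{12}^\#=(e_1\wedge e_2)^\#$, $e^{12}_\#=(e^1\wedge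 e^2)_\#$ with $(e^i)$ the dual basis. *)

From HB Require Import structures.
From mathcomp Require Import all_boot all_order all_algebra.
From mathcomp Require Import reals.
Set Implicit Arguments. Unset Strict Implicit. Unset Printing Implicit Defensive.
Import Order.TTheory GRing.Theory Num.Theory.
Local Open Scope ring_scope.

(* Model: g = R^4 (row vectors 'rV_4) with an arbitrary Lie bracket br;
   g^* is also modelled by 'rV_4 with the pairing  alpha(u) = sum_i alpha_i u_i.
   Linear maps are matrices acting on the right: u |-> u *m M. *)

Section Defs.
Variable R : realType.
Notation V := 'rV[R]_4.

Definition pair (alpha u : V) : R := \sum_(i < 4) alpha 0 i * u 0 i.

Definition is_lie_bracket (br : V -> V -> V) : Prop :=
  [/\ (forall (a : R) u v w, br (a *: u + v) w = a *: br u w + br v w),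
      (forall u v, br u v = - br v u) &
      (forall u v w, br u (br v w) + br v (br w u) + br w (br u v) = 0)].

(* the matrix of ad_u (row convention: v *m adm br u = br u v) *)
Definition adm (br : V -> V -> V) (u : V) : 'M[R]_4 :=
  \matrix_(i, j) (br u (delta_mx 0 i)) 0 j.

Definition unimodular (br : V -> V -> V) : Prop :=
  forall u, \tr (adm br u) = 0.

Definition adt (br : V -> V -> V) (u alpha : V) : V :=
  \row_j (- pair alpha (br u (delta_mx 0 j))).

(* Phi(g) = g (+) g^*  as pairs (u, alpha) *)
Definition Phi := (V * V)%type.
Definition padd (a b : Phi) : Phi := (a.1 + b.1, a.2 + b.2).
Definition popp (a : Phi) : Phi := (- a.1, - a.2).
Definition pzero : Phi := (0, 0).

Definition Phi_pairing (a b : Phi) : R :=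
  2^-1 * (pair a.2 b.1 + pair b.2 a.1).

Definition Phi_bracket (br : V -> V -> V) (a b : Phi) : Phi :=
  (br a.1 b.1, adt br a.1 b.2 - adt br b.1 a.2).

(* dual map J^* : (J^* alpha)(u) = alpha(J u) *)
Definition dualmx (J : 'M[R]_4) (alpha : V) : V := alpha *m J^T.

(* K = ( J  R ; sigma  -J^* ) *)
Definition Kmap (J Rm S : 'M[R]_4) (a : Phi) : Phi :=
  (a.1 *m J + a.2 *m Rm, a.1 *m S - dualmx J a.2).

Definition nijenhuis (br : V -> V -> V) (K : Phi -> Phi) (a b : Phi) : Phi :=
  let B := Phi_bracket br in
  padd (padd (padd (B (K a) (K b)) (popp (K (B (K a) b))))
             (popp (K (B a (K b)))))
       (K (K (B a b))).

Definition gen_complex (br : V -> V -> V) (K : Phi -> Phi) : Prop :=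
  [/\ (forall a, K (K a) = popp a),
      (forall a b, Phi_pairing (K a) b + Phi_pairing a (K b) = 0) &
      (forall a b, nijenhuis br K a b = pzero)].

Definition gc_triple (br : V -> V -> V) (J Rm S : 'M[R]_4) : Prop :=
  gen_complex br (Kmap J Rm S).

(* type 1 in dimension 4: rank R = 2 *)
Definition gc_type1 (Rm : 'M[R]_4) : Prop := \rank Rm = 2%N.

Definition brackets (br : V -> V -> V) (e1 e2 e3 e4 : V)
  (c12 c13 c14 c23 c24 c34 : V) : Prop :=
  [/\ br e1 e2 = c12, br e1 e3 = c13, br e1 e4 = c14 &
      [/\ br e2 e3 = c23, br e2 e4 = c24 & br e3 e4 = c34]].

End Defs.

Definition o1 : 'I_4 := @Ordinal 4 0 isT.
Definition o2 : 'I_4 := @Ordinal 4 1 isT.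
Definition o3 : 'I_4 := @Ordinal 4 2 isT.
Definition o4 : 'I_4 := @Ordinal 4 3 isT.

From HB Require Import structures.
From mathcomp Require Import all_boot all_order all_algebra.
From mathcomp Require Import reals.
From mathcomp Require Import ring lra.
Import Order.TTheory GRing.Theory Num.Theory.
Set Implicit Arguments. Unset Strict Implicit. Unset Printing Implicit Defensive.
Local Open Scope ring_scope.

(* K^2 = -1 and the orthogonality of K say
      that R and sigma are skew, R J = J^* R, sigma J = J^* sigma and
      J^2 + sigma R = -1.  A skew map of rank 2 is a bivector R = e1 /\ e2; its
      plane is an eigenspace of J, and J^2 = -1 on a complement <e3, e4>.  In
      the basis (e1, e2, e3, e4) the triple becomes the standard structure
      (Jstd l, Rstd, Sstd l) [normal_form].
   2. Change of basis.  Integrability, unimodularity and the conclusion are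
      invariant under change of basis [gc_lie_transport, classified_transport],
      so we may assume that (J, R, sigma) is standard.
   3. Structure constants.  For the standard structure, integrability and
      unimodularity amount to linear relations among the structure constants
      c_ij^k [std_relations].  A further change of basis preserving the standard
      structure [adapted_change] normalizes the constants, and the Jacobi
      identity then forces one of the families U1, U2, U3 [classify_std]. *)

Lemma twice_eq0 (R : numFieldType) (x : R) : x + x = 0 -> x = 0.
Proof. by rewrite -mulr2n => /eqP; rewrite mulrn_eq0 /= => /eqP. Qed.

Section Coordinates.
Variable R : realType.
Notation V := 'rV[R]_4.
Implicit Types (u v alpha : V) (A : 'M[R]_4).

Lemma sum4 (T : nmodType) (F : 'I_4 -> T) :
  \sum_(i < 4) F i = F o1 + F o2 + F o3 + F o4.
Proof.
rewrite !big_ord_recr big_ord0 /= add0r.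
by congr (_ + _ + _ + _); apply: congr1; apply/val_inj.
Qed.

Lemma ord4P (P : 'I_4 -> Prop) : P o1 -> P o2 -> P o3 -> P o4 -> forall k, P k.
Proof.
move=> h1 h2 h3 h4 [[|[|[|[|//]]]] Hk].
- by rewrite (_ : Ordinal Hk = o1) //; apply/val_inj.
- by rewrite (_ : Ordinal Hk = o2) //; apply/val_inj.
- by rewrite (_ : Ordinal Hk = o3) //; apply/val_inj.
- by rewrite (_ : Ordinal Hk = o4) //; apply/val_inj.
Qed.

Lemma row4_eq (T : Type) (u w : 'rV[T]_4) : u 0 o1 = w 0 o1 -> u 0 o2 = w 0 o2 ->
  u 0 o3 = w 0 o3 -> u 0 o4 = w 0 o4 -> u = w.
Proof.
by move=> h1 h2 h3 h4; apply/rowP; apply: ord4P.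
Qed.

Lemma mx4_eq (T : Type) (A B : 'M[T]_4) : row o1 A = row o1 B -> row o2 A = row o2 B ->
  row o3 A = row o3 B -> row o4 A = row o4 B -> A = B.
Proof.
by move=> h1 h2 h3 h4; apply/row_matrixP; apply: ord4P.
Qed.

Lemma mx_ext A B : (forall u : V, u *m A = u *m B) -> A = B.
Proof.
by move=> H; apply/row_matrixP => i; rewrite -[A]mul1mx -[B]mul1mx !row_mul H.
Qed.

Lemma pairC_tr alpha u : pair alpha u = (alpha *m u^T) 0 0.
Proof. by rewrite /pair mxE; apply: eq_bigr => i _; rewrite mxE. Qed.

Lemma pair_mulmx alpha u A : pair (alpha *m A) u = pair alpha (u *m A^T).
Proof. by rewrite !pairC_tr trmx_mul trmxK mulmxA. Qed.

Lemma pair_trmx alpha u A : pair (alpha *m A^T) u = pair alpha (u *m A).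
Proof. by rewrite pair_mulmx trmxK. Qed.

Lemma pairDl a b u : pair (a + b) u = pair a u + pair b u.
Proof. by rewrite /pair -big_split; apply: eq_bigr => i _; rewrite mxE mulrDl. Qed.
Lemma pairDr a u v : pair a (u + v) = pair a u + pair a v.
Proof. by rewrite /pair -big_split; apply: eq_bigr => i _; rewrite mxE mulrDr. Qed.
Lemma pairZl (c : R) a u : pair (c *: a) u = c * pair a u.
Proof. by rewrite /pair mulr_sumr; apply: eq_bigr => i _; rewrite mxE mulrA. Qed.
Lemma pairZr (c : R) a u : pair a (c *: u) = c * pair a u.
Proof. by rewrite /pair mulr_sumr; apply: eq_bigr => i _; rewrite mxE mulrCA. Qed.
Lemma pair0l u : pair 0 u = 0.
Proof. by rewrite /pair big1 // => i _; rewrite mxE mul0r. Qed.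
Lemma pair0r u : pair u 0 = 0.
Proof. by rewrite /pair big1 // => i _; rewrite mxE mulr0. Qed.
Lemma pairNl a u : pair (- a) u = - pair a u.
Proof. by rewrite -scaleN1r pairZl mulN1r. Qed.
Lemma pairNr a u : pair a (- u) = - pair a u.
Proof. by rewrite -scaleN1r pairZr mulN1r. Qed.
Lemma pairBl a b u : pair (a - b) u = pair a u - pair b u.
Proof. by rewrite pairDl pairNl. Qed.
Lemma pairBr a u v : pair a (u - v) = pair a u - pair a v.
Proof. by rewrite pairDr pairNr. Qed.

Lemma pair_deltal j u : pair (delta_mx 0 j) u = u 0 j.
Proof.
rewrite /pair (bigD1 j) //= big1 ?addr0; first by rewrite mxE !eqxx mul1r.
by move=> k nk; rewrite mxE eqxx (negbTE nk) mul0r.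
Qed.

Lemma pair_deltar j u : pair u (delta_mx 0 j) = u 0 j.
Proof.
by rewrite -(pair_deltal j u) /pair; apply: eq_bigr => k _; rewrite mulrC.
Qed.

Lemma coord_mulmx_tr alpha A n : (alpha *m A^T) 0 n = pair alpha (row n A).
Proof. by rewrite !mxE /pair; apply: eq_bigr => k _; rewrite !mxE. Qed.

Definition rows4 (e1 e2 e3 e4 : V) : 'M[R]_4 :=
  \matrix_(k, m) (nth 0 [:: e1; e2; e3; e4] k) 0 m.

Lemma rows4E e1 e2 e3 e4 :
  [/\ row o1 (rows4 e1 e2 e3 e4) = e1, row o2 (rows4 e1 e2 e3 e4) = e2,
      row o3 (rows4 e1 e2 e3 e4) = e3 & row o4 (rows4 e1 e2 e3 e4) = e4].
Proof. by split; apply/rowP => m; rewrite !mxE. Qed.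

End Coordinates.

Section LieBracket.
Variables (R : realType) (br : 'rV[R]_4 -> 'rV[R]_4 -> 'rV[R]_4).
Hypothesis Hl : is_lie_bracket br.
Notation V := 'rV[R]_4.
Implicit Types (u v w : V).

Lemma brDl u v w : br (u + v) w = br u w + br v w.
Proof. by have [H _ _] := Hl; have := H 1 u v w; rewrite !scale1r. Qed.
Lemma br0l w : br 0 w = 0.
Proof.
have [H _ _] := Hl; have E := H 1 0 0 w; rewrite !scale1r addr0 in E.
by apply: (addrI (br 0 w)); rewrite addr0 -E.
Qed.
Lemma brZl (a : R) u w : br (a *: u) w = a *: br u w.
Proof. by have [H _ _] := Hl; have := H a u 0 w; rewrite !addr0 br0l addr0. Qed.
Lemma brC u v : br u v = - br v u.
Proof. by have [_ H _] := Hl. Qed.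
Lemma brDr u v w : br w (u + v) = br w u + br w v.
Proof. by rewrite brC brDl opprD -!brC. Qed.
Lemma brZr (a : R) u w : br w (a *: u) = a *: br w u.
Proof. by rewrite brC brZl -scalerN -brC. Qed.
Lemma br0r w : br w 0 = 0.
Proof. by rewrite brC br0l oppr0. Qed.
Lemma brNl u w : br (- u) w = - br u w.
Proof. by rewrite -scaleN1r brZl scaleN1r. Qed.
Lemma brNr u w : br w (- u) = - br w u.
Proof. by rewrite -scaleN1r brZr scaleN1r. Qed.

Lemma brsumr (I : finType) (F : I -> V) w : br w (\sum_i F i) = \sum_i br w (F i).
Proof.
apply: (big_ind2 (fun x y => br w x = y)) => //; first exact: br0r.
by move=> x1 x2 y1 y2 <- <-; rewrite brDr.
Qed.

Lemma brsuml (I : finType) (F : I -> V) w : br (\sum_i F i) w = \sum_i br (F i) w.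
Proof.
apply: (big_ind2 (fun x y => br x w = y)) => //; first exact: br0l.
by move=> x1 x2 y1 y2 <- <-; rewrite brDl.
Qed.

Lemma brii u : br u u = 0.
Proof.
have : (2:R) *: br u u = 0 by rewrite scaler_nat mulr2n {1}brC addNr.
by move/eqP; rewrite scaler_eq0 pnatr_eq0 /= => /eqP.
Qed.

Lemma adm_mul u v : v *m adm br u = br u v.
Proof.
rewrite {2}(row_sum_delta v) brsumr; apply/rowP => j.
by rewrite !mxE summxE; apply: eq_bigr => i _; rewrite !mxE brZr mxE.
Qed.

End LieBracket.

Lemma adt_adm (R : realType) (br : 'rV[R]_4 -> 'rV[R]_4 -> 'rV[R]_4) u alpha :
  adt br u alpha = - (alpha *m (adm br u)^T).
Proof.
apply/rowP => j; rewrite !mxE; congr (- _); rewrite /pair.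
by apply: eq_bigr => i _; rewrite !mxE.
Qed.

(* The hypotheses and the conclusion of the theorem, for a triple (J, R, sigma)
   given by matrices.  [gc_lie] keeps only the integrability part of being
   generalized complex: the algebraic part is used once, to reach a normal form.
   [lie_U1], [lie_U2], [lie_U3] are the three families of brackets. *)
Section Statements.
Variable R : realType.
Notation V := 'rV[R]_4.

Definition gc_lie (br : V -> V -> V) (J Rm S : 'M[R]_4) : Prop :=
  [/\ is_lie_bracket br, unimodular br &
      forall a b, nijenhuis br (Kmap J Rm S) a b = pzero R].

Definition lie_U1 (br : V -> V -> V) (e1 e2 e3 e4 : V) : Prop :=
  exists y q1 q2 : R,
    brackets br e1 e2 e3 e4 e1 0 0
      (2^-1 *: e3 - y *: e4 - q1 *: e1) (y *: e3 + 2^-1 *: e4 - q2 *: e1) 0.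

Definition lie_U2 (br : V -> V -> V) (e1 e2 e3 e4 : V) : Prop :=
  exists y q1 q2 b1 b2 : R,
    brackets br e1 e2 e3 e4 0 0 0
      (- (y *: e4) - q1 *: e1) (y *: e3 - q2 *: e1) (b1 *: e1 + b2 *: e2).

Definition lie_U3 (br : V -> V -> V) (e1 e2 e3 e4 : V) : Prop :=
  exists b1 b2 p q r : R,
    [/\ brackets br e1 e2 e3 e4 0 0
          (- (p *: e1 + r *: e2)) 0 (- (q *: e1 - p *: e2)) (b1 *: e1 + b2 *: e2)
      & (`|p ^+ 2 + q * r| == 0) || (`|p ^+ 2 + q * r| == 1)].

Definition classified (br : V -> V -> V) (J Rm S : 'M[R]_4) : Prop :=
  exists (P : 'M[R]_4) (f : 'I_4 -> 'rV[R]_4) (lam : R),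
    let e1 := row o1 P in let e2 := row o2 P in
    let e3 := row o3 P in let e4 := row o4 P in
    [/\ P \in unitmx /\
        (forall i j, pair (f i) (row j P) = (i == j)%:R),
        [/\ e1 *m J = lam *: e1, e2 *m J = lam *: e2,
            e3 *m J = - e4 & e4 *m J = e3],
        (forall alpha, alpha *m Rm = pair alpha e1 *: e2 - pair alpha e2 *: e1),
        (forall u, u *m S =
           (1 + lam ^+ 2) *: (pair (f o1) u *: f o2 - pair (f o2) u *: f o1)) &
        [\/ lie_U1 br e1 e2 e3 e4, lie_U2 br e1 e2 e3 e4 | lie_U3 br e1 e2 e3 e4]].

End Statements.

(* For an invertible P, [tbr P br] is the bracket br written
   in the basis formed by the rows of P; on Phi(g) = g + g^* the change of basis
   acts by [Tphi], and it intertwines the brackets, the endomorphisms K and hence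
   the Nijenhuis tensors. *)
Section ChangeOfBasis.
Variable R : realType.
Notation V := 'rV[R]_4.
Variables (P : 'M[R]_4) (br : V -> V -> V).
Hypothesis HP : P \in unitmx.

Definition tbr : V -> V -> V := fun x y => br (x *m P) (y *m P) *m invmx P.

Definition tJ (J : 'M[R]_4) := P *m J *m invmx P.
Definition tR (Rm : 'M[R]_4) := (invmx P)^T *m Rm *m invmx P.
Definition tS (S : 'M[R]_4) := P *m S *m P^T.

Lemma tbrK x y : br (x *m P) (y *m P) = tbr x y *m P.
Proof. by rewrite /tbr mulmxKV. Qed.

Lemma trmx_inv_cancel : P^T *m (invmx P)^T = 1%:M.
Proof. by rewrite -trmx_mul mulVmx // trmx1. Qed.

Section Lie.
Hypothesis Hl : is_lie_bracket br.

Lemma tbr_lie : is_lie_bracket tbr.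
Proof.
have [_ H2 H3] := Hl; split.
- move=> a u v w.
  by rewrite /tbr mulmxDl -scalemxAl (brDl Hl) (brZl Hl) mulmxDl scalemxAl.
- by move=> u v; rewrite /tbr H2 mulNmx.
- by move=> u v w; rewrite /tbr !mulmxKV // -!mulmxDl H3 mul0mx.
Qed.

Lemma adm_tbr x : adm tbr x = P *m adm br (x *m P) *m invmx P.
Proof.
apply/row_matrixP => i; rewrite !row_mul.
have -> : row i P = delta_mx 0 i *m P by rewrite -rowE.
by rewrite (adm_mul Hl); apply/rowP => j; rewrite !mxE.
Qed.

Lemma tbr_unimodular : unimodular br -> unimodular tbr.
Proof.
move=> Hu x; rewrite adm_tbr mxtrace_mulC mulmxA mulVmx // mul1mx; exact: Hu.
Qed.

Definition Tphi (a : Phi R) : Phi R := (a.1 *m invmx P, a.2 *m P^T).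

Lemma Tphi_surj a : exists b, a = Tphi b.
Proof.
exists (a.1 *m P, a.2 *m (invmx P)^T); case: a => u al.
by rewrite /Tphi /= mulmxK // -mulmxA -trmx_mul mulmxV // trmx1 mulmx1.
Qed.

Lemma Tphi_bracket a b :
  Phi_bracket tbr (Tphi a) (Tphi b) = Tphi (Phi_bracket br a b).
Proof.
case: a b => u al [v be]; rewrite /Phi_bracket /Tphi /=.
congr (_, _); first by rewrite /tbr !mulmxKV.
rewrite !adt_adm !adm_tbr !mulmxKV // mulmxBl !mulNmx.
by rewrite !trmx_mul !mulmxA -![_ *m P^T *m (invmx P)^T]mulmxA trmx_inv_cancel !mulmx1.
Qed.

Lemma Tphi_K J Rm S a :
  Kmap (tJ J) (tR Rm) (tS S) (Tphi a) = Tphi (Kmap J Rm S a).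
Proof.
case: a => u al; rewrite /Kmap /Tphi /dualmx /tJ /tR /tS /=.
congr (_, _).
- by rewrite mulmxDl !mulmxA mulmxKV // -[al *m P^T *m _]mulmxA trmx_inv_cancel mulmx1.
- rewrite mulmxBl !mulmxA mulmxKV //; congr (_ - _).
  by rewrite !trmx_mul !mulmxA -[al *m P^T *m _]mulmxA trmx_inv_cancel mulmx1.
Qed.

Lemma Tphi_nijenhuis J Rm S a b :
  nijenhuis tbr (Kmap (tJ J) (tR Rm) (tS S)) (Tphi a) (Tphi b)
  = Tphi (nijenhuis br (Kmap J Rm S) a b).
Proof.
have Tphi_padd x y : padd (Tphi x) (Tphi y) = Tphi (padd x y).
  by rewrite /Tphi /padd /= !mulmxDl.
have Tphi_popp x : popp (Tphi x) = Tphi (popp x) by rewrite /Tphi /popp /= !mulNmx.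
rewrite /nijenhuis; cbv zeta.
by do 4 rewrite ?Tphi_K ?Tphi_bracket; rewrite !Tphi_popp !Tphi_padd.
Qed.
End Lie.

Lemma gc_lie_transport J Rm S :
  gc_lie br J Rm S -> gc_lie tbr (tJ J) (tR Rm) (tS S).
Proof.
case=> Hl Hu HN; split; [exact: tbr_lie | exact: tbr_unimodular |].
move=> x y; have [a ->] := Tphi_surj x; have [b ->] := Tphi_surj y.
by rewrite Tphi_nijenhuis // HN /Tphi /= !mul0mx.
Qed.

Lemma brackets_transport e1 e2 e3 e4 c12 c13 c14 c23 c24 c34 :
  brackets tbr e1 e2 e3 e4 c12 c13 c14 c23 c24 c34 ->
  brackets br (e1 *m P) (e2 *m P) (e3 *m P) (e4 *m P)
    (c12 *m P) (c13 *m P) (c14 *m P) (c23 *m P) (c24 *m P) (c34 *m P).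
Proof.
by case=> E12 E13 E14 [E23 E24 E34]; split; [ | | | split ];
  rewrite tbrK ?E12 ?E13 ?E14 ?E23 ?E24 ?E34.
Qed.

Ltac push_mulmx :=
  do 3 rewrite ?mul0mx ?mulmxDl ?mulmxBl ?mulNmx; rewrite -?scalemxAl.

Lemma classified_transport J Rm S :
  classified tbr (tJ J) (tR Rm) (tS S) -> classified br J Rm S.
Proof.
move=> [P1 [f [lam]]] /=; case=> [[HP1 Hf] [EJ1 EJ2 EJ3 EJ4] ER ES Hbr].
exists (P1 *m P), (fun i => f i *m (invmx P)^T), lam => /=.
have rowM i : row i (P1 *m P) = row i P1 *m P by rewrite row_mul.
have pM a x : pair (a *m (invmx P)^T) (x *m P) = pair a x.
  by rewrite pair_mulmx trmxK mulmxK.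
have JM x : x *m P *m J = x *m tJ J *m P by rewrite /tJ !mulmxA mulmxKV.
rewrite !rowM; split.
- split; first by rewrite unitmx_mul HP1 HP.
  by move=> i j; rewrite rowM pM Hf.
- by split; rewrite JM ?EJ1 ?EJ2 ?EJ3 ?EJ4 ?scalemxAl ?mulNmx.
- move=> al; have -> : al *m Rm = al *m P^T *m tR Rm *m P.
    by rewrite /tR !mulmxA mulmxKV // -(mulmxA al) trmx_inv_cancel mulmx1.
  by rewrite ER mulmxBl !scalemxAl !pair_mulmx !trmxK.
- move=> u; have -> : u *m S = u *m invmx P *m tS S *m (invmx P)^T.
    by rewrite /tS !mulmxA mulmxKV // -[u *m S *m P^T *m _]mulmxA trmx_inv_cancel mulmx1.
  by rewrite ES -scalemxAl mulmxBl -!scalemxAl !pair_mulmx !trmxK.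
- case: Hbr => [[y [q1 [q2 /brackets_transport H]]]
              |[y [q1 [q2 [b1 [b2 /brackets_transport H]]]]]
              |[b1 [b2 [p [q [r [/brackets_transport H Hpq]]]]]]].
  + by apply: Or31; exists y, q1, q2; move: H; push_mulmx.
  + by apply: Or32; exists y, q1, q2, b1, b2; move: H; push_mulmx.
  + by apply: Or33; exists b1, b2, p, q, r; split => //; move: H; push_mulmx.
Qed.

End ChangeOfBasis.

Section StandardStructure.
Variable R : realType.

Definition Jstd (l : R) : 'M[R]_4 := \matrix_(i, j)
  match val i, val j with
  | 0%N, 0%N => l | 1%N, 1%N => l | 2%N, 3%N => -1 | 3%N, 2%N => 1 | _, _ => 0 end.
Definition Rstd : 'M[R]_4 := \matrix_(i, j)
  match val i, val j with
  | 0%N, 1%N => 1 | 1%N, 0%N => -1 | _, _ => 0 end.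
Definition Sstd (l : R) : 'M[R]_4 := \matrix_(i, j)
  match val i, val j with
  | 0%N, 1%N => 1 + l ^+ 2 | 1%N, 0%N => - (1 + l ^+ 2) | _, _ => 0 end.

Lemma Rstd_mul (u : 'rV[R]_4) :
  u *m Rstd = u 0 o1 *: delta_mx 0 o2 - u 0 o2 *: delta_mx 0 o1.
Proof. by apply: row4_eq; rewrite !mxE sum4 !mxE /=; ring. Qed.

End StandardStructure.
Arguments Rstd {R}.

(* The algebraic (non-differential) content of "K is generalized complex":
   the (1,1), (1,2) and (2,1) blocks of K^2 = -1, and the skew-symmetry of R
   and sigma coming from the orthogonality of K. *)
Lemma gc_algebraic (R : realType) br (J Rm S : 'M[R]_4) :
  gen_complex br (Kmap J Rm S) ->
  [/\ forall u : 'rV_4, u *m J *m J + u *m S *m Rm = - u,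
      forall u : 'rV_4, u *m J *m S = u *m S *m J^T,
      forall al : 'rV_4, al *m Rm *m J = al *m J^T *m Rm,
      forall al be : 'rV_4, pair be (al *m Rm) + pair al (be *m Rm) = 0 &
      forall u v : 'rV_4, pair (u *m S) v + pair (v *m S) u = 0].
Proof.
case=> K2 Sk _.
have half0 (x : R) : 2^-1 * x = 0 -> x = 0.
  by move/eqP; rewrite mulf_eq0 invr_eq0 pnatr_eq0 /= => /eqP.
have Kg (u : 'rV_4) : u *m J *m J + u *m S *m Rm = - u /\ u *m J *m S - (u *m S) *m J^T = 0.
  by have := K2 (u, 0); rewrite /Kmap /dualmx /popp /= !mul0mx !addr0 subr0 oppr0; case.
split.
- by move=> u; case: (Kg u).
- by move=> u; case: (Kg u) => _ /eqP; rewrite subr_eq0 => /eqP.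
- move=> al; have := K2 (0, al); rewrite /Kmap /dualmx /popp /= ?mul0mx ?add0r ?sub0r.
  by case=> /eqP; rewrite oppr0 mulNmx subr_eq0 => /eqP.
- move=> al be; apply: half0; have := Sk (0, al) (0, be).
  by rewrite /Phi_pairing /Kmap /dualmx /= ?mul0mx ?add0r ?sub0r ?pair0r ?add0r ?addr0 -mulrDr.
- move=> u v; apply: half0; have := Sk (u, 0) (v, 0).
  by rewrite /Phi_pairing /Kmap /dualmx /= !mul0mx !addr0 !subr0 !pair0l add0r addr0 -mulrDr.
Qed.

Section SkewRankTwo.
Variables (R : realType) (Rm : 'M[R]_4).
Notation V := 'rV[R]_4.
Hypothesis R_skew : forall al be : V, pair be (al *m Rm) + pair al (be *m Rm) = 0.
Hypothesis R_rank : \rank Rm = 2%N.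

Lemma R_skew0 al : pair al (al *m Rm) = 0.
Proof. exact/twice_eq0/R_skew. Qed.

Lemma rowspace_dual_zero (e1 e2 a1 a2 w : V) :
  pair a1 e1 = 1 -> pair a2 e1 = 0 -> pair a1 e2 = 0 -> pair a2 e2 = 1 ->
  (e1 <= Rm)%MS -> (e2 <= Rm)%MS -> (w <= Rm)%MS ->
  pair a1 w = 0 -> pair a2 w = 0 -> w = 0.
Proof.
move=> p11 p21 p12 p22 s1 s2 sw w1 w2.
pose E : 'M[R]_(2, 4) := \matrix_(r, m) (if r == 0 then e1 else e2) 0 m.
pose A : 'M[R]_(4, 2) := \matrix_(m, r) (if r == 0 then a1 else a2) 0 m.
have EA : E *m A = 1%:M.
  apply/matrixP => r t.
  have -> : (E *m A) r t = pair (if t == 0 then a1 else a2) (if r == 0 then e1 else e2).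
    by rewrite !mxE /pair; apply: eq_bigr => m _; rewrite !mxE mulrC.
  by case: r => [[|[|//]] ?]; case: t => [[|[|//]] ?]; rewrite !mxE /=.
have rankE : \rank E = 2%N.
  apply/eqP; rewrite eqn_leq rank_leq_row /=.
  by have := mxrankM_maxl E A; rewrite EA mxrank1.
have sER : (E <= Rm)%MS.
  apply/row_subP => r.
  have -> : row r E = if r == 0 then e1 else e2.
    by apply/rowP => m; rewrite !mxE; case: (r == 0).
  by case: (r == 0).
have sRE : (Rm <= E)%MS.
  by have := (mxrank_leqif_sup sER).2; rewrite rankE R_rank eqxx => <-.
have /submxP [D HD] : (w <= E)%MS by apply: submx_trans sw sRE.
have wA : w *m A = 0.
  apply/rowP => t; rewrite !mxE.
  have -> : \sum_j w 0 j * A j t = pair (if t == 0 then a1 else a2) w.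
    by rewrite /pair; apply: eq_bigr => m _; rewrite !mxE mulrC.
  by case: (t == 0).
by move: wA; rewrite HD -mulmxA EA mulmx1 => ->; rewrite mul0mx.
Qed.

Lemma skew_rank2_decomposable : exists a1 a2 e1 e2 : V,
  [/\ [/\ pair a1 e1 = 1, pair a2 e1 = 0, pair a1 e2 = 0 & pair a2 e2 = 1] &
      forall al, al *m Rm = pair al e1 *: e2 - pair al e2 *: e1].
Proof.
have [i [j Hij]] : exists i j, Rm i j != 0.
  case: (boolP [exists i, [exists j, Rm i j != 0]]) => [/existsP [i /existsP [j H]]|/negP H].
    by exists i, j.
  suff Rm0 : Rm = 0 by move: R_rank; rewrite Rm0 mxrank0.
  apply/matrixP => i j; rewrite mxE; apply/eqP/negPn/negP => nz.
  by apply: H; apply/existsP; exists i; apply/existsP; exists j.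
pose a1 : V := (Rm i j)^-1 *: delta_mx 0 i.
pose a2 : V := delta_mx 0 j.
pose e2 := a1 *m Rm.
pose e1 := - (a2 *m Rm).
have p22 : pair a2 e2 = 1.
  by rewrite /e2 /a1 /a2 pair_deltal -scalemxAl mxE -rowE mxE mulVf.
clearbody a1 a2.
have p11 : pair a1 e1 = 1.
  by have := R_skew a2 a1; rewrite -/e2 p22 /e1 pairNr; lra.
have p21 : pair a2 e1 = 0 by rewrite pairNr R_skew0 oppr0.
have p12 : pair a1 e2 = 0 by rewrite R_skew0.
suff RF al : al *m Rm = pair al e1 *: e2 - pair al e2 *: e1 by exists a1, a2, e1, e2.
pose k := al - pair al e1 *: a1 - pair al e2 *: a2.
have kR : k *m Rm = al *m Rm - (pair al e1 *: e2 - pair al e2 *: e1).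
  rewrite /k !mulmxBl -(scalemxAl (pair al e1)) -(scalemxAl (pair al e2)).
  by rewrite /e1 scalerN opprK opprD addrA.
have pk1 : pair k e1 = 0 by rewrite /k !pairBl !pairZl p11 p21; ring.
have pk2 : pair k e2 = 0 by rewrite /k !pairBl !pairZl p12 p22; ring.
have kR0 : k *m Rm = 0.
  apply: (rowspace_dual_zero p11 p21 p12 p22) => //.
  - by rewrite /e1 -mulNmx submxMl.
  - exact: submxMl.
  - exact: submxMl.
  - by have := R_skew k a1; rewrite -/e2 pk2 addr0.
  - have h : pair k (a2 *m Rm) = 0 by rewrite -[a2 *m Rm]opprK -/e1 pairNr pk1 oppr0.
    by have := R_skew k a2; rewrite h addr0.
by apply/eqP; rewrite -subr_eq0 -kR kR0.
Qed.

End SkewRankTwo.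

(* If x e3 + y e4 = 0 and y e3 - x e4 = 0 with e3 <> 0, then x = y = 0,
   because (x^2 + y^2) e3 = 0. *)
Lemma rotation_pair_free (R : realFieldType) n (e3 e4 : 'rV[R]_n) (x y : R) : e3 != 0 ->
  x *: e3 + y *: e4 = 0 -> y *: e3 - x *: e4 = 0 -> x = 0 /\ y = 0.
Proof.
move=> e3_nz H HJ.
have : (x ^+ 2 + y ^+ 2) *: e3 = 0.
  have <- : x *: (x *: e3 + y *: e4) + y *: (y *: e3 - x *: e4) = (x ^+ 2 + y ^+ 2) *: e3.
    by apply/rowP => k; rewrite !mxE; ring.
  by rewrite H HJ !scaler0 addr0.
move/eqP; rewrite scaler_eq0 (negbTE e3_nz) orbF => /eqP hsq.
by split; have := sqr_ge0 x; have := sqr_ge0 y; nra.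
Qed.

(* Since R J = J^* R, the plane <e1, e2> is an eigenspace of J, with
   eigenvalue l; since J^2 + sigma R = -1, the operator J^2 + 1 has image in
   that plane, so J^2 = -1 on the kernel of J^2 + 1 - (1 + l^2), which provides
   e3 and e4 = - J e3. *)
Section NormalForm.
Variables (R : realType) (J Rm S : 'M[R]_4).
Notation V := 'rV[R]_4.
Hypothesis JJ_SR : forall u : V, u *m J *m J + u *m S *m Rm = - u.
Hypothesis JS_comm : forall u : V, u *m J *m S = u *m S *m J^T.
Hypothesis RJ_comm : forall al : V, al *m Rm *m J = al *m J^T *m Rm.
Hypothesis S_skew : forall u v : V, pair (u *m S) v + pair (v *m S) u = 0.
Hypothesis R_rank : \rank Rm = 2%N.
Variables a1 a2 e1 e2 : V.
Hypotheses (p11 : pair a1 e1 = 1) (p21 : pair a2 e1 = 0)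
           (p12 : pair a1 e2 = 0) (p22 : pair a2 e2 = 1).
Hypothesis R_decomp : forall al, al *m Rm = pair al e1 *: e2 - pair al e2 *: e1.

Lemma R_plane_eigen : exists l, e1 *m J = l *: e1 /\ e2 *m J = l *: e2.
Proof.
have a1R : a1 *m Rm = e2 by rewrite R_decomp p11 p12 scale0r scale1r subr0.
have a2R : a2 *m Rm = - e1 by rewrite R_decomp p21 p22 scale0r scale1r sub0r.
set l := pair a2 (e2 *m J).
have e1J : e1 *m J = l *: e1 - pair a2 (e1 *m J) *: e2.
  have h : e1 *m J = - (a2 *m J^T *m Rm) by rewrite -RJ_comm a2R mulNmx opprK.
  by rewrite {1}h R_decomp !pair_trmx opprB.
have hb : pair a2 (e1 *m J) = 0.
  apply: twice_eq0; have := congr1 (pair a2) e1J.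
  by rewrite pairBr !pairZr p21 p22 mulr0 sub0r mulr1 => /eqP; rewrite -addr_eq0 => /eqP.
have E1J : e1 *m J = l *: e1 by rewrite e1J hb scale0r subr0.
have e2J : e2 *m J = l *: e2 - pair a1 (e2 *m J) *: e1.
  have h : e2 *m J = a1 *m J^T *m Rm by rewrite -RJ_comm a1R.
  by rewrite {1}h R_decomp !pair_trmx E1J pairZr p11 mulr1.
have hc : pair a1 (e2 *m J) = 0.
  apply: twice_eq0; have := congr1 (pair a1) e2J.
  by rewrite pairBr !pairZr p11 p12 mulr0 sub0r mulr1 => /eqP; rewrite -addr_eq0 => /eqP.
by exists l; rewrite E1J {1}e2J hc scale0r subr0.
Qed.

Lemma JJ1_SR : J *m J + 1%:M = - (S *m Rm).
Proof.
apply: mx_ext => u; rewrite mulmxDr mulmx1 mulmxN !mulmxA.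
by apply/eqP; rewrite -subr_eq0 opprK -addrA [u + _]addrC addrA JJ_SR addNr.
Qed.

Variable l : R.
Hypotheses (E1J : e1 *m J = l *: e1) (E2J : e2 *m J = l *: e2).

Lemma one_plus_sq_neq0 : 1 + l ^+ 2 != 0.
Proof. by apply: lt0r_neq0; have := sqr_ge0 l; lra. Qed.

Lemma JJ_plane (x y : R) : (x *: e1 + y *: e2) *m J *m J = l ^+ 2 *: (x *: e1 + y *: e2).
Proof.
rewrite !mulmxDl -!scalemxAl E1J E2J -!scalemxAl E1J E2J !scalerA scalerDr !scalerA.
by congr (_ *: _ + _ *: _); ring.
Qed.

(* J^2 + 1 = - sigma R maps everything into <e1, e2>, where it acts as 1 + l^2. *)
Lemma JJ1_sq :
  (J *m J + 1%:M) *m (J *m J + 1%:M) = (1 + l ^+ 2) *: (J *m J + 1%:M).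
Proof.
have JJ1 u : u *m (J *m J + 1%:M) = - (pair (u *m S) e1 *: e2 - pair (u *m S) e2 *: e1).
  by rewrite JJ1_SR mulmxN mulmxA R_decomp.
apply: mx_ext => u; rewrite mulmxA -scalemxAr.
have [x [y ->]] : exists x y, u *m (J *m J + 1%:M) = x *: e1 + y *: e2.
  by exists (pair (u *m S) e2), (- pair (u *m S) e1); rewrite JJ1 opprB scaleNr addrC.
by rewrite mulmxDr mulmx1 mulmxA JJ_plane scalerDl scale1r addrC.
Qed.

(* The rows of 1 - (J^2 + 1) / (1 + l^2) are killed by J^2 + 1, and it is not
   zero since otherwise 1 would factor through R, of rank 2. *)
Lemma exists_e3 : exists e3 : V, e3 != 0 /\ e3 *m J *m J = - e3.
Proof.
pose c := (1 + l ^+ 2)^-1.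
pose PiM : 'M[R]_4 := 1%:M - c *: (J *m J + 1%:M).
have PiM_JJ1 : PiM *m (J *m J + 1%:M) = 0.
  rewrite /PiM mulmxBl mul1mx -scalemxAl JJ1_sq scalerA mulVf ?one_plus_sq_neq0 //.
  by rewrite scale1r subrr.
have PiM_nz : PiM != 0.
  apply/eqP => H.
  have H1 : 1%:M = c *: (J *m J + 1%:M) by apply/eqP; rewrite -subr_eq0 -/PiM H.
  have : (1%:M <= Rm)%MS by rewrite H1 JJ1_SR scalerN scalemxAl -mulNmx submxMl.
  by move/mxrankS; rewrite mxrank1 R_rank.
have [i0 Hi0] : exists i0, row i0 PiM != 0.
  case: (boolP [exists i, row i PiM != 0]) => [/existsP [i1 H]|/existsPn H]; first by exists i1.
  case/negP: PiM_nz; apply/eqP/row_matrixP => i1; rewrite row0.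
  by apply/eqP; move: (H i1); rewrite negbK.
exists (row i0 PiM); split => //.
apply/eqP; rewrite -addr_eq0 -[X in _ + X]mulmx1 -mulmxA -mulmxDr -row_mul.
by rewrite PiM_JJ1 row0.
Qed.

Variable e3 : V.
Hypotheses (e3_nz : e3 != 0) (E3JJ : e3 *m J *m J = - e3).
Let e4 := - (e3 *m J).
Let P := rows4 e1 e2 e3 e4.

Lemma E3J : e3 *m J = - e4.
Proof. by rewrite /e4 opprK. Qed.
Lemma E4J : e4 *m J = e3.
Proof. by rewrite /e4 mulNmx E3JJ opprK. Qed.

(* e1 and e2 are independent, as witnessed by the dual forms a1, a2. *)
Lemma plane_free (x y : R) : x *: e1 + y *: e2 = 0 -> x = 0 /\ y = 0.
Proof.
move=> H; have h1 := congr1 (pair a1) H; have h2 := congr1 (pair a2) H.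
rewrite pairDr !pairZr p11 p12 pair0r in h1; rewrite pairDr !pairZr p21 p22 pair0r in h2.
by split; lra.
Qed.

(* e1, e2, e3, e4 is a basis: J^2 + 1 vanishes on <e3, e4> and is invertible
   on <e1, e2>. *)
Lemma adapted_basis_unit : P \in unitmx.
Proof.
have [P1 P2 P3 P4] := rows4E e1 e2 e3 e4.
rewrite -row_free_unit; apply: inj_row_free => z.
rewrite mulmx_sum_row sum4 P1 P2 P3 P4 -addrA.
set w := _ *: e1 + _ *: e2; set v := _ *: e3 + _ *: e4 => H0.
have vJJ : v *m J *m J = - v.
  by rewrite /v !mulmxDl -!scalemxAl E3JJ E4J E3J !scalerN opprD.
have Hw : (1 + l ^+ 2) *: w = 0.
  have := congr1 (fun t => t *m J *m J + t) H0.
  rewrite /= !mul0mx addr0 mulmxDl mulmxDl vJJ /w JJ_plane -/w => <-.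
  by apply/rowP => k; rewrite !mxE; ring.
move: Hw => /eqP; rewrite scaler_eq0 (negbTE one_plus_sq_neq0) /= => /eqP w0.
move: H0; rewrite w0 add0r => v0.
have v0J : z 0 o4 *: e3 - z 0 o3 *: e4 = 0.
  have := congr1 (mulmx^~ J) v0; rewrite /= mul0mx mulmxDl -!scalemxAl E3J E4J.
  by rewrite scalerN addrC.
have [z1 z2] := plane_free w0; have [z3 z4] := rotation_pair_free e3_nz v0 v0J.
by apply: row4_eq; rewrite mxE ?z1 ?z2 ?z3 ?z4.
Qed.

Lemma J_adapted : P *m J = Jstd l *m P.
Proof.
have [P1 P2 P3 P4] := rows4E e1 e2 e3 e4.
apply: mx4_eq; rewrite !row_mul [row _ (Jstd l) *m _]mulmx_sum_row sum4 P1 P2 P3 P4.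
all: rewrite ?E1J ?E2J ?E3J ?E4J !mxE /=.
all: by rewrite ?scale0r ?add0r ?addr0 ?scaleN1r ?scale1r.
Qed.

Lemma R_adapted : Rm = P^T *m Rstd *m P.
Proof.
have [P1 P2 P3 P4] := rows4E e1 e2 e3 e4.
apply: mx_ext => al; rewrite R_decomp !mulmxA Rstd_mul mulmxBl -!scalemxAl -!rowE.
by rewrite !coord_mulmx_tr P1 P2.
Qed.

(* sigma is determined by its values on the basis: J^2 + sigma R = -1 gives
   those involving e1 or e2, and sigma J = J^* sigma gives sigma(e3, e4) = 0. *)
Lemma sigma_adapted : P *m S *m P^T = Sstd l.
Proof.
have [P1 P2 P3 P4] := rows4E e1 e2 e3 e4.
have Sk u w : pair (u *m S) w = - pair (w *m S) u by apply/eqP; rewrite -addr_eq0 S_skew.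
have S0 u : pair (u *m S) u = 0 by apply: twice_eq0; apply: S_skew.
have SRa u : pair a1 (u *m S *m Rm) = - pair (u *m S) e2 /\
             pair a2 (u *m S *m Rm) = pair (u *m S) e1.
  by rewrite R_decomp !pairBr !pairZr p11 p12 p21 p22; split; ring.
have S12 : pair (e1 *m S) e2 = 1 + l ^+ 2.
  have := congr1 (pair a1) (JJ_SR e1); case: (SRa e1) => + _.
  rewrite E1J -scalemxAl E1J pairDr => ->; rewrite !pairZr pairNr p11 mulr1 -expr2 => h; lra.
have Sperp u : u *m J *m J = - u -> pair (u *m S) e1 = 0 /\ pair (u *m S) e2 = 0.
  move=> uJJ; have : u *m S *m Rm = 0.
    by apply: (@addrI _ (- u)); rewrite addr0 -{2}(JJ_SR u) uJJ.
  case: (SRa u) => h1 h2 uSR; rewrite uSR !pair0r in h1 h2.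
  by split; lra.
have [S31 S32] := Sperp e3 E3JJ.
have [S41 S42] : pair (e4 *m S) e1 = 0 /\ pair (e4 *m S) e2 = 0.
  by apply: Sperp; rewrite E4J E3J.
have S34 : pair (e3 *m S) e4 = 0.
  rewrite /e4 pairNr; apply/eqP; rewrite oppr_eq0; apply/eqP; apply: twice_eq0.
  by have := S_skew (e3 *m J) e3; rewrite JS_comm pair_trmx addrC.
have entry a b : row a (P *m S *m P^T) 0 b = pair (row a P *m S) (row b P).
  by rewrite !row_mul mxE /pair; apply: eq_bigr => k _; rewrite !mxE.
apply: mx4_eq; apply: row4_eq; rewrite entry ?P1 ?P2 ?P3 ?P4 !mxE /=.
all: by rewrite ?S0 ?S12 ?S31 ?S32 ?S41 ?S42 ?S34 // Sk ?S12 ?S31 ?S32 ?S41 ?S42 ?S34 ?oppr0.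
Qed.

End NormalForm.

Lemma normal_form (R : realType) br (J Rm S : 'M[R]_4) :
  gen_complex br (Kmap J Rm S) -> \rank Rm = 2%N ->
  exists (P : 'M[R]_4) (l : R),
    [/\ P \in unitmx, tJ P J = Jstd l, tR P Rm = Rstd & tS P S = Sstd l].
Proof.
move=> /gc_algebraic [JJ_SR JS_comm RJ_comm R_skew S_skew] R_rank.
have [a1 [a2 [e1 [e2 [[p11 p21 p12 p22] R_decomp]]]]] :=
  skew_rank2_decomposable R_skew R_rank.
have [l [E1J E2J]] := R_plane_eigen RJ_comm p11 p21 p12 p22 R_decomp.
have [e3 [e3_nz E3JJ]] := exists_e3 JJ_SR R_rank R_decomp E1J E2J.
have HP := adapted_basis_unit p11 p21 p12 p22 E1J E2J e3_nz E3JJ.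
exists (rows4 e1 e2 e3 (- (e3 *m J))), l; split => //.
- by rewrite /tJ (J_adapted E1J E2J E3JJ) mulmxK.
- rewrite /tR (R_adapted J R_decomp e3) !mulmxA -trmx_mul mulmxV // trmx1 mul1mx.
  by rewrite mulmxK.
- exact: (sigma_adapted JJ_SR JS_comm S_skew p11 p21 p12 p22 R_decomp E1J E3JJ).
Qed.

Definition cc (R : realType) (br : 'rV[R]_4 -> 'rV[R]_4 -> 'rV[R]_4) (i j k : 'I_4) : R :=
  br (delta_mx 0 i) (delta_mx 0 j) 0 k.

Section StructureConstants.
Variables (R : realType) (br : 'rV[R]_4 -> 'rV[R]_4 -> 'rV[R]_4).
Notation V := 'rV[R]_4.
Notation d i := (delta_mx 0 i : 'rV[R]_4).
Local Notation c := (cc br).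

Lemma cc_fold i j k : br (d i) (d j) 0 k = c i j k.
Proof. by []. Qed.

Lemma br_basis i j :
  br (d i) (d j) = c i j o1 *: d o1 + c i j o2 *: d o2 + c i j o3 *: d o3 + c i j o4 *: d o4.
Proof. by apply: row4_eq; rewrite !mxE /= /cc; ring. Qed.

Hypothesis Hl : is_lie_bracket br.

(* Antisymmetry, as a rewrite multirule putting indices in increasing order. *)
Lemma cc_ordered :
  (forall k, c o2 o1 k = - c o1 o2 k) * (forall k, c o3 o1 k = - c o1 o3 k) *
  (forall k, c o4 o1 k = - c o1 o4 k) * (forall k, c o3 o2 k = - c o2 o3 k) *
  (forall k, c o4 o2 k = - c o2 o4 k) * (forall k, c o4 o3 k = - c o3 o4 k) *
  (forall i k, c i i k = 0).
Proof.
have skew i j k : c i j k = - c j i k by rewrite /cc (brC Hl) mxE.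
by do !split => *; [exact: skew ..| rewrite /cc (brii Hl) mxE].
Qed.

Lemma br_coord (u v : V) m :
  br u v 0 m = \sum_a \sum_b u 0 a * v 0 b * c a b m.
Proof.
rewrite {1}(row_sum_delta u) (brsuml Hl) summxE; apply: eq_bigr => a _.
rewrite (brZl Hl) mxE {1}(row_sum_delta v) (brsumr Hl) summxE mulr_sumr.
by apply: eq_bigr => b _; rewrite (brZr Hl) mxE mulrA.
Qed.

Lemma jacobi_cc i j k m :
  \sum_q (c j k q * c i q m + c k i q * c j q m + c i j q * c k q m) = 0.
Proof.
have [_ _ H3] := Hl.
have br2 a b e : br (d a) (br (d b) (d e)) 0 m = \sum_q c b e q * c a q m.
  rewrite {1}(row_sum_delta (br (d b) (d e))) (brsumr Hl) summxE.
  by apply: eq_bigr => q _; rewrite (brZr Hl) mxE.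
have := congr1 (fun w : V => w 0 m) (H3 (d i) (d j) (d k)).
by rewrite /= !mxE !br2 -!big_split.
Qed.

Lemma cc_tbr (P : 'M[R]_4) i j k :
  cc (tbr P br) i j k = \sum_m (\sum_a \sum_b P i a * P j b * c a b m) * invmx P m k.
Proof.
rewrite /cc /tbr mxE; apply: eq_bigr => m _; rewrite br_coord -!rowE.
by congr (_ * _); apply: eq_bigr => a _; apply: eq_bigr => b _; rewrite !mxE.
Qed.

End StructureConstants.

(* Integrability of the standard structure (Jstd l, Rstd, Sstd l) together with
   unimodularity implies twelve linear relations among the structure constants:
   they come from N_K(e^1, e^3), N_K(e^2, e^3), N_K(e^1, e^2) and tr ad = 0. *)
Section StandardRelations.
Variables (R : realType) (br : 'rV[R]_4 -> 'rV[R]_4 -> 'rV[R]_4) (l : R).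
Notation V := 'rV[R]_4.
Notation d i := (delta_mx 0 i : 'rV[R]_4).
Notation K := (Kmap (Jstd l) Rstd (Sstd l)).
Hypothesis Hl : is_lie_bracket br.
Hypothesis HN : forall a b, nijenhuis br K a b = pzero R.
Hypothesis Hu : unimodular br.
Local Notation c := (cc br).

Lemma Jstd_tr_mul (X : V) : X *m (Jstd l)^T =
  (l * X 0 o1) *: d o1 + (l * X 0 o2) *: d o2 - X 0 o4 *: d o3 + X 0 o3 *: d o4.
Proof. by apply: row4_eq; rewrite !mxE sum4 !mxE /=; ring. Qed.

Lemma K_covector :
  (forall X : V, K (0, X) = (X *m Rstd, - (X *m (Jstd l)^T))) *
  (d o1 *m Rstd = d o2) * (d o2 *m Rstd = - d o1) * (d o3 *m Rstd = 0) *
  (d o1 *m (Jstd l)^T = l *: d o1) * (d o2 *m (Jstd l)^T = l *: d o2) *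
  (d o3 *m (Jstd l)^T = d o4).
Proof.
do !split; first by move=> X; rewrite /Kmap /dualmx !mul0mx add0r sub0r.
all: by apply: row4_eq; rewrite ?Rstd_mul ?Jstd_tr_mul !mxE /=; ring.
Qed.

Lemma adt_lin :
  (forall al, adt br 0 al = 0) * (forall u al, adt br (- u) al = - adt br u al) *
  (forall u al, adt br u (- al) = - adt br u al) *
  (forall u (a : R) al, adt br u (a *: al) = a *: adt br u al).
Proof.
do !split => *; apply/rowP => j; rewrite !mxE.
- by rewrite (br0l Hl) pair0r oppr0.
- by rewrite (brNl Hl) pairNr.
- by rewrite pairNl.
- by rewrite pairZl mulrN.
Qed.

Ltac nijenhuis_simpl H := rewrite /nijenhuis in H; cbv zeta in H;
  do 4 (rewrite ?K_covector ?(br0r Hl) ?(br0l Hl) ?(brNl Hl) ?(brNr Hl) ?adt_lin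
     ?subr0 ?sub0r ?oppr0 ?mul0mx /Phi_bracket /= in H);
  rewrite /padd /popp /pzero /= in H.

Ltac coord H k := let E := fresh "E" in
  have E := congr1 (fun w : V => w 0 k) H;
  rewrite /= ?Rstd_mul ?Jstd_tr_mul !mxE ?pair_deltal ?cc_fold /= in E.

Lemma nijenhuis_13 :
  [/\ c o1 o2 o3 = 0, c o1 o2 o4 = 0, c o2 o3 o4 = - c o2 o4 o3 & c o2 o3 o3 = c o2 o4 o4].
Proof.
have H := HN (0, d o1) (0, d o3).
nijenhuis_simpl H. case: H => H1 H2.
coord H1 o2. coord H2 o1. coord H2 o3. coord H2 o4.
move: E E0 E1 E2; rewrite ?(cc_ordered Hl) => E E0 E1 E2.
split; nra.
Qed.

Lemma nijenhuis_23 : c o1 o3 o4 = - c o1 o4 o3 /\ c o1 o3 o3 = c o1 o4 o4.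
Proof.
have H := HN (0, d o2) (0, d o3).
nijenhuis_simpl H. case: H => H1 H2.
coord H2 o3. coord H2 o4.
move: E E0; rewrite ?(cc_ordered Hl) => E E0.
split; lra.
Qed.

Lemma nijenhuis_12 : c o1 o3 o1 = - c o2 o3 o2 /\ c o1 o4 o1 = - c o2 o4 o2.
Proof.
have H := HN (0, d o1) (0, d o2).
nijenhuis_simpl H. case: H => H1 H2.
coord H2 o3. coord H2 o4.
move: E E0; rewrite ?(cc_ordered Hl) => E E0.
set X := c o1 o3 o1 + c o2 o3 o2; set Y := c o1 o4 o1 + c o2 o4 o2.
have e1 : l * X + Y = 0 by rewrite /X /Y; nra.
have e2 : l * Y - X = 0 by rewrite /X /Y; nra.
have nz := one_plus_sq_neq0 l.
have hX : (1 + l ^+ 2) * X = 0.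
  have -> : (1 + l ^+ 2) * X = l * (l * X + Y) - (l * Y - X) by ring.
  by rewrite e1 e2; ring.
have hY : (1 + l ^+ 2) * Y = 0.
  have -> : (1 + l ^+ 2) * Y = (l * X + Y) + l * (l * Y - X) by ring.
  by rewrite e1 e2; ring.
move/eqP: hX; rewrite mulf_eq0 (negbTE nz) /= /X => /eqP hX.
move/eqP: hY; rewrite mulf_eq0 (negbTE nz) /= /Y => /eqP hY.
split; lra.
Qed.

Lemma trace_cc k : \tr (adm br (d k)) = c k o1 o1 + c k o2 o2 + c k o3 o3 + c k o4 o4.
Proof. by rewrite /mxtrace sum4 !mxE. Qed.

Lemma std_relations :
  (c o1 o2 o1 = 2 * c o2 o4 o4) * (c o1 o2 o2 = - (2 * c o1 o4 o4)) *
  (c o1 o2 o3 = 0) * (c o1 o2 o4 = 0) *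
  (c o1 o3 o1 = - c o2 o3 o2) * (c o1 o3 o3 = c o1 o4 o4) *
  (c o1 o3 o4 = - c o1 o4 o3) * (c o1 o4 o1 = - c o2 o4 o2) *
  (c o2 o3 o3 = c o2 o4 o4) * (c o2 o3 o4 = - c o2 o4 o3) *
  (c o3 o4 o3 = 0) * (c o3 o4 o4 = 0).
Proof.
have [h1 h2 h3 h4] := nijenhuis_13.
have [h5 h6] := nijenhuis_23.
have [h7 h8] := nijenhuis_12.
have t1 := Hu (d o1); have t2 := Hu (d o2); have t3 := Hu (d o3); have t4 := Hu (d o4).
rewrite trace_cc in t1; rewrite trace_cc in t2; rewrite trace_cc in t3; rewrite trace_cc in t4.
move: t1 t2 t3 t4; rewrite ?(cc_ordered Hl) => t1 t2 t3 t4.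
by do !split; lra.
Qed.

End StandardRelations.

Section StandardBasis.
Variables (R : realType) (br : 'rV[R]_4 -> 'rV[R]_4 -> 'rV[R]_4) (l : R).
Notation d i := (delta_mx 0 i : 'rV[R]_4).
Hypothesis Hl : is_lie_bracket br.
Hypothesis HN : forall a b, nijenhuis br (Kmap (Jstd l) Rstd (Sstd l)) a b = pzero R.
Hypothesis Hu : unimodular br.
Local Notation c := (cc br).

Lemma classified_std_basis :
  [\/ lie_U1 br (d o1) (d o2) (d o3) (d o4), lie_U2 br (d o1) (d o2) (d o3) (d o4)
    | lie_U3 br (d o1) (d o2) (d o3) (d o4)] ->
  classified br (Jstd l) Rstd (Sstd l).
Proof.
have row1 k : row k (1%:M : 'M[R]_4) = d k by rewrite rowE mulmx1.
move=> HU; exists 1%:M, (fun i => d i), l; rewrite /= !row1; split => //.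
- split; first exact: unitmx1.
  by move=> i j; rewrite pair_deltal row1 mxE eqxx /= eq_sym.
- by split; apply: row4_eq; rewrite !mxE sum4 !mxE /=; ring.
- by move=> al; apply: row4_eq; rewrite Rstd_mul !pair_deltar !mxE /=; ring.
- by move=> u; apply: row4_eq; rewrite !pair_deltal !mxE sum4 !mxE /=; ring.
Qed.

Local Ltac jacobi i j k m := let J := fresh "J" in
  have J := jacobi_cc Hl i j k m; rewrite !sum4 in J; move: J;
  rewrite ?(cc_ordered Hl) ?(std_relations Hl HN Hu) => J.

Local Ltac solve_brackets :=
  split; [ | | | split ]; rewrite br_basis ?(cc_ordered Hl) ?(std_relations Hl HN Hu).

Lemma U1_std : c o1 o4 o4 = 0 -> c o2 o4 o4 = 2^-1 ->
  lie_U1 br (d o1) (d o2) (d o3) (d o4).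
Proof.
move=> hb ha.
jacobi o1 o2 o3 o4. rewrite hb ha in J.
have h143 : c o1 o4 o3 = 0 by nra.
jacobi o1 o2 o3 o1. jacobi o1 o2 o4 o1. rewrite hb ha h143 in J0 J1.
have h242 : c o2 o4 o2 = 0 by nra.
have h232 : c o2 o3 o2 = 0 by nra.
jacobi o1 o2 o3 o2. jacobi o1 o2 o4 o2. rewrite hb ha h143 h242 h232 in J2 J3.
have h132 : c o1 o3 o2 = 0 by nra.
have h142 : c o1 o4 o2 = 0 by nra.
jacobi o1 o3 o4 o1. jacobi o2 o3 o4 o1.
rewrite hb ha h143 h242 h232 h132 h142 in J4 J5.
have h342 : c o3 o4 o2 = 0 by nra.
have h341 : c o3 o4 o1 = 0 by nra.
exists (c o2 o4 o3), (- c o2 o3 o1), (- c o2 o4 o1).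
by solve_brackets;
  rewrite ?hb ?ha ?h143 ?h242 ?h232 ?h132 ?h142 ?h342 ?h341;
  apply: row4_eq; rewrite !mxE /=; field.
Qed.

Lemma U2_std : c o1 o4 o4 = 0 -> c o2 o4 o4 = 0 -> c o1 o4 o3 = 0 -> c o2 o4 o3 != 0 ->
  lie_U2 br (d o1) (d o2) (d o3) (d o4).
Proof.
move=> hb ha h143 hy.
have cancel x : x * c o2 o4 o3 = 0 -> x = 0.
  by move/eqP; rewrite mulf_eq0 (negbTE hy) orbF => /eqP.
jacobi o1 o2 o3 o1. jacobi o1 o2 o3 o2. jacobi o1 o2 o4 o1. jacobi o1 o2 o4 o2.
rewrite hb ha h143 in J J0 J1 J2.
have h242 : c o2 o4 o2 = 0 by apply: cancel; nra.
have h142 : c o1 o4 o2 = 0 by apply: cancel; nra.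
have h232 : c o2 o3 o2 = 0 by apply: cancel; nra.
have h132 : c o1 o3 o2 = 0 by apply: cancel; nra.
exists (c o2 o4 o3), (- c o2 o3 o1), (- c o2 o4 o1), (c o3 o4 o1), (c o3 o4 o2).
by solve_brackets; rewrite ?hb ?ha ?h143 ?h242 ?h232 ?h132 ?h142;
  apply: row4_eq; rewrite !mxE /=; ring.
Qed.

Lemma U3_std : c o1 o4 o4 = 0 -> c o2 o4 o4 = 0 -> c o1 o4 o3 = 0 -> c o2 o4 o3 = 0 ->
  c o1 o3 o2 = 0 -> c o2 o3 o1 = 0 -> c o2 o3 o2 = 0 ->
  (`|c o2 o4 o2 ^+ 2 + (- c o2 o4 o1) * (- c o1 o4 o2)| == 0) ||
  (`|c o2 o4 o2 ^+ 2 + (- c o2 o4 o1) * (- c o1 o4 o2)| == 1) ->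
  lie_U3 br (d o1) (d o2) (d o3) (d o4).
Proof.
move=> hb ha h143 h243 h132 h231 h232 hpq.
exists (c o3 o4 o1), (c o3 o4 o2), (c o2 o4 o2), (- c o2 o4 o1), (- c o1 o4 o2).
split => //; solve_brackets; rewrite ?hb ?ha ?h143 ?h243 ?h132 ?h231 ?h232;
  by apply: row4_eq; rewrite !mxE /=; ring.
Qed.

(* In the remaining case the vectors (c_23^2, c_13^2, c_23^1) and
   (c_24^2, c_14^2, c_24^1) are proportional. *)
Lemma U3_minors : c o1 o4 o4 = 0 -> c o2 o4 o4 = 0 -> c o1 o4 o3 = 0 -> c o2 o4 o3 = 0 ->
 [/\ c o2 o3 o2 * c o1 o4 o2 - c o1 o3 o2 * c o2 o4 o2 = 0,
     c o2 o3 o2 * c o2 o4 o1 - c o2 o3 o1 * c o2 o4 o2 = 0 &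
     c o1 o3 o2 * c o2 o4 o1 - c o2 o3 o1 * c o1 o4 o2 = 0].
Proof.
move=> hb ha h143 h243.
jacobi o1 o3 o4 o2. jacobi o2 o3 o4 o1. jacobi o1 o3 o4 o1.
rewrite hb ha h143 h243 in J J0 J1.
by split; nra.
Qed.

End StandardBasis.

Ltac mx4_entries := apply: mx4_eq; apply: row4_eq; do 3 rewrite ?mxE ?sum4 /=.

Lemma tJ_comm (R : realType) (P J : 'M[R]_4) :
  P \in unitmx -> P *m J = J *m P -> tJ P J = J.
Proof. by move=> HP PJ; rewrite /tJ PJ mulmxK. Qed.

(* The changes of basis preserving the standard structure that we use:
   e1' = s e1 - t e2, e2' = (t e1 + s e2) / (s^2 + t^2) (a conformal map of
   determinant 1 of the plane <e1, e2>) and a rotation-dilation of <e3, e4>. *)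
Section AdaptedChange.
Variables (R : realType) (s t a b : R).
Let D := s ^+ 2 + t ^+ 2.
Let E := a ^+ 2 + b ^+ 2.
Hypotheses (hD : D != 0) (hE : E != 0).

Definition adapted_change : 'M[R]_4 := \matrix_(i, j)
  match val i, val j with
  | 0%N, 0%N => s | 0%N, 1%N => - t | 1%N, 0%N => t / D | 1%N, 1%N => s / D
  | 2%N, 2%N => a | 2%N, 3%N => b | 3%N, 2%N => - b | 3%N, 3%N => a | _, _ => 0 end.

Definition adapted_change_inv : 'M[R]_4 := \matrix_(i, j)
  match val i, val j with
  | 0%N, 0%N => s / D | 0%N, 1%N => t | 1%N, 0%N => - t / D | 1%N, 1%N => s
  | 2%N, 2%N => a / E | 2%N, 3%N => - b / E | 3%N, 2%N => b / E | 3%N, 3%N => a / E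
  | _, _ => 0 end.

Local Notation P := adapted_change.

Lemma adapted_changeK : P *m adapted_change_inv = 1%:M.
Proof. by mx4_entries; rewrite /D /E; field; rewrite ?hD ?hE. Qed.

Lemma adapted_change_unit : P \in unitmx.
Proof. by case: (mulmx1_unit adapted_changeK). Qed.

Lemma invmx_adapted_change : invmx P = adapted_change_inv.
Proof.
by rewrite -[invmx P]mulmx1 -adapted_changeK mulmxA mulVmx ?adapted_change_unit // mul1mx.
Qed.

Lemma adapted_change_J (l : R) : tJ P (Jstd l) = Jstd l.
Proof. by apply: tJ_comm; [exact: adapted_change_unit | mx4_entries; ring]. Qed.

Lemma adapted_change_R : tR P Rstd = Rstd.
Proof.
rewrite /tR invmx_adapted_change.
by mx4_entries; rewrite /D /E; field; rewrite ?hD ?hE.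
Qed.

Lemma adapted_change_S (l : R) : tS P (Sstd l) = Sstd l.
Proof. by rewrite /tS; mx4_entries; rewrite /D /E; field; rewrite ?hD ?hE. Qed.

End AdaptedChange.

(* With
   e3' = al e3 + be e4 the new constants p, q, r are linear in (al, be) and
   p^2 + qr is the quadratic form [pqr_form]; a dilation scales it by a
   positive factor, which brings |p^2 + qr| to 0 or 1. *)
Section U3Normalization.
Variable R : realType.

Definition pqr_form (x1 x2 x3 y1 y2 y3 al be : R) :=
  (- be * x1 + al * y1) ^+ 2 + (- be * x3 + al * y3) * (- be * x2 + al * y2).

Lemma normalize_pqr (x1 x2 x3 y1 y2 y3 a0 b0 : R) :
  a0 ^+ 2 + b0 ^+ 2 != 0 ->
  a0 * x1 + b0 * y1 = 0 -> a0 * x2 + b0 * y2 = 0 -> a0 * x3 + b0 * y3 = 0 ->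
  exists al be : R, [/\ al ^+ 2 + be ^+ 2 != 0,
    al * x1 + be * y1 = 0, al * x2 + be * y2 = 0, al * x3 + be * y3 = 0 &
    (`|pqr_form x1 x2 x3 y1 y2 y3 al be| == 0) ||
    (`|pqr_form x1 x2 x3 y1 y2 y3 al be| == 1)].
Proof.
move=> nz h1 h2 h3.
have [Q0|Qnz] := eqVneq (pqr_form x1 x2 x3 y1 y2 y3 a0 b0) 0.
  by exists a0, b0; split => //; rewrite Q0 normr0 eqxx.
set Q := pqr_form x1 x2 x3 y1 y2 y3 a0 b0 in Qnz.
set sq := Num.sqrt `|Q|.
have sqp : 0 < sq by rewrite sqrtr_gt0 normr_gt0.
have sq2 : sq ^+ 2 = `|Q| by rewrite sqr_sqrtr.
exists (sq^-1 * a0), (sq^-1 * b0); split.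
- have -> : (sq^-1 * a0) ^+ 2 + (sq^-1 * b0) ^+ 2 = sq^-1 ^+ 2 * (a0 ^+ 2 + b0 ^+ 2).
    by ring.
  by rewrite mulf_neq0 // expf_neq0 // invr_eq0 lt0r_neq0.
- by rewrite -!mulrA -mulrDr h1 mulr0.
- by rewrite -!mulrA -mulrDr h2 mulr0.
- by rewrite -!mulrA -mulrDr h3 mulr0.
- have -> : pqr_form x1 x2 x3 y1 y2 y3 (sq^-1 * a0) (sq^-1 * b0) = Q / sq ^+ 2.
    by rewrite /Q /pqr_form; field; exact: lt0r_neq0.
  by rewrite normrM normfV normrX (gtr0_norm sqp) sq2 mulfV ?eqxx ?orbT // normr_eq0.
Qed.

Lemma proportional_kernel (x1 x2 x3 y1 y2 y3 : R) :
  x1 * y2 - x2 * y1 = 0 -> x1 * y3 - x3 * y1 = 0 -> x2 * y3 - x3 * y2 = 0 ->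
  exists al be : R, [/\ al ^+ 2 + be ^+ 2 != 0,
    al * x1 + be * y1 = 0, al * x2 + be * y2 = 0, al * x3 + be * y3 = 0 &
    (`|pqr_form x1 x2 x3 y1 y2 y3 al be| == 0) ||
    (`|pqr_form x1 x2 x3 y1 y2 y3 al be| == 1)].
Proof.
move=> m1 m2 m3.
have sq_nz (u v : R) : (u != 0) || (v != 0) -> v ^+ 2 + (- u) ^+ 2 != 0.
  move=> h; apply/eqP => e.
  have hu : u = 0 by have := sqr_ge0 u; have := sqr_ge0 v; nra.
  have hv : v = 0 by have := sqr_ge0 u; have := sqr_ge0 v; nra.
  by move: h; rewrite hu hv eqxx.
case: (boolP ((x1 != 0) || (y1 != 0))) => [h|].
  by apply: (normalize_pqr (sq_nz _ _ h)); nra.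
rewrite negb_or !negbK => /andP [/eqP hx1 /eqP hy1].
case: (boolP ((x2 != 0) || (y2 != 0))) => [h|].
  by apply: (normalize_pqr (sq_nz _ _ h)); nra.
rewrite negb_or !negbK => /andP [/eqP hx2 /eqP hy2].
case: (boolP ((x3 != 0) || (y3 != 0))) => [h|].
  by apply: (normalize_pqr (sq_nz _ _ h)); nra.
rewrite negb_or !negbK => /andP [/eqP hx3 /eqP hy3].
apply: (@normalize_pqr _ _ _ _ _ _ 1 0); rewrite ?hx1 ?hx2 ?hx3 ?hy1 ?hy2 ?hy3; try ring.
by rewrite expr0n /= addr0 expr1n oner_eq0.
Qed.

End U3Normalization.

Lemma adapted_change_reduction (R : realType) br (l s t a b : R) :
  s ^+ 2 + t ^+ 2 != 0 -> a ^+ 2 + b ^+ 2 != 0 ->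
  let P := adapted_change s t a b in
  gc_lie br (Jstd l) Rstd (Sstd l) ->
  (gc_lie (tbr P br) (Jstd l) Rstd (Sstd l) ->
     classified (tbr P br) (Jstd l) Rstd (Sstd l)) ->
  classified br (Jstd l) Rstd (Sstd l).
Proof.
move=> hD hE P H K.
have HP := adapted_change_unit hD hE.
have H' := gc_lie_transport HP H.
rewrite adapted_change_J ?adapted_change_R ?adapted_change_S // in H'.
apply: (classified_transport HP).
by rewrite adapted_change_J ?adapted_change_R ?adapted_change_S //; apply: K.
Qed.

(* Classification for the standard structure: a change of basis in <e1, e2>
   normalizes (c_24^4, c_14^4) to (1/2, 0) when nonzero (family U1); otherwise
   one normalizes (c_24^3, c_14^3) to (1, 0) when nonzero (family U2);
   otherwise a rotation-dilation of <e3, e4> gives family U3. *)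
Section StandardClassification.
Variables (R : realType) (br : 'rV[R]_4 -> 'rV[R]_4 -> 'rV[R]_4) (l : R).
Hypothesis Hl : is_lie_bracket br.
Hypothesis HN : forall a b, nijenhuis br (Kmap (Jstd l) Rstd (Sstd l)) a b = pzero R.
Hypothesis Hu : unimodular br.
Local Notation c := (cc br).

Local Ltac new_cc hD hE :=
  rewrite (cc_tbr Hl) ?(invmx_adapted_change hD hE); do 3 rewrite ?mxE ?sum4 /=;
  rewrite ?(cc_ordered Hl) ?(std_relations Hl HN Hu).

Lemma unit_sq_sum : (1 : R) ^+ 2 + 0 ^+ 2 != 0.
Proof. by rewrite expr0n /= addr0 expr1n oner_eq0. Qed.

Lemma classify_U1 : c o2 o4 o4 ^+ 2 + c o1 o4 o4 ^+ 2 != 0 ->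
  classified br (Jstd l) Rstd (Sstd l).
Proof.
move=> hAB.
have hD : (2 * c o2 o4 o4) ^+ 2 + (2 * c o1 o4 o4) ^+ 2 != 0.
  by apply: contraNneq hAB => h; apply/eqP; nra.
have hE := unit_sq_sum.
apply: (adapted_change_reduction hD hE); first by split.
case=> Hl' HN' Hu'; apply: classified_std_basis => //; apply: Or31; apply: U1_std => //.
- by new_cc hD hE; field.
- by new_cc hD hE; field.
Qed.

Lemma classify_U2 : c o2 o4 o4 = 0 -> c o1 o4 o4 = 0 ->
  c o2 o4 o3 ^+ 2 + c o1 o4 o3 ^+ 2 != 0 -> classified br (Jstd l) Rstd (Sstd l).
Proof.
move=> ha hb hD; have hE := unit_sq_sum.
apply: (adapted_change_reduction hD hE); first by split.
case=> Hl' HN' Hu'; apply: classified_std_basis => //; apply: Or32; apply: U2_std => //.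
- by new_cc hD hE; rewrite ?ha ?hb; field.
- by new_cc hD hE; rewrite ?ha ?hb; field.
- by new_cc hD hE; rewrite ?ha ?hb; field.
- have -> : cc (tbr (adapted_change (c o2 o4 o3) (c o1 o4 o3) 1 0) br) o2 o4 o3 = 1.
    by new_cc hD hE; rewrite ?ha ?hb; field.
  exact: oner_neq0.
Qed.

Lemma classify_U3 : c o2 o4 o4 = 0 -> c o1 o4 o4 = 0 -> c o2 o4 o3 = 0 -> c o1 o4 o3 = 0 ->
  classified br (Jstd l) Rstd (Sstd l).
Proof.
move=> ha hb hy2 hy1.
have [m1 m2 m3] := U3_minors Hl HN Hu hb ha hy1 hy2.
have [al [be [hE e1 e2 e3 hq]]] := proportional_kernel m1 m2 m3.
have hD := unit_sq_sum.
apply: (adapted_change_reduction hD hE); first by split.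
case=> Hl' HN' Hu'; apply: classified_std_basis => //; apply: Or33; apply: U3_std => //.
- by new_cc hD hE; rewrite ?ha ?hb ?hy1 ?hy2; field.
- by new_cc hD hE; rewrite ?ha ?hb ?hy1 ?hy2; field.
- by new_cc hD hE; rewrite ?ha ?hb ?hy1 ?hy2; field.
- by new_cc hD hE; rewrite ?ha ?hb ?hy1 ?hy2; field.
- by rewrite -[RHS]e2; new_cc hD hE; rewrite ?ha ?hb ?hy1 ?hy2; field.
- by rewrite -[RHS]e3; new_cc hD hE; rewrite ?ha ?hb ?hy1 ?hy2; field.
- by rewrite -[RHS]e1; new_cc hD hE; rewrite ?ha ?hb ?hy1 ?hy2; field.
- set br' := tbr _ br.
  have E1 : cc br' o2 o4 o2 = - be * c o2 o3 o2 + al * c o2 o4 o2.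
    by rewrite /br'; new_cc hD hE; rewrite ?ha ?hb ?hy1 ?hy2; field.
  have E2 : cc br' o2 o4 o1 = - be * c o2 o3 o1 + al * c o2 o4 o1.
    by rewrite /br'; new_cc hD hE; rewrite ?ha ?hb ?hy1 ?hy2; field.
  have E3 : cc br' o1 o4 o2 = - be * c o1 o3 o2 + al * c o1 o4 o2.
    by rewrite /br'; new_cc hD hE; rewrite ?ha ?hb ?hy1 ?hy2; field.
  rewrite E1 E2 E3.
  set w := _ ^+ 2 + _.
  suff -> : w = pqr_form (c o2 o3 o2) (c o1 o3 o2) (c o2 o3 o1)
                         (c o2 o4 o2) (c o1 o4 o2) (c o2 o4 o1) al be by [].
  by rewrite /w /pqr_form; ring.
Qed.

Lemma classify_std : classified br (Jstd l) Rstd (Sstd l).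
Proof.
have sq0 (x y : R) : x ^+ 2 + y ^+ 2 = 0 -> x = 0 /\ y = 0.
  by move=> h; split; have := sqr_ge0 x; have := sqr_ge0 y; nra.
have [/sq0 [ha hb]|] := eqVneq (c o2 o4 o4 ^+ 2 + c o1 o4 o4 ^+ 2) 0; last exact: classify_U1.
have [/sq0 [hy2 hy1]|] := eqVneq (c o2 o4 o3 ^+ 2 + c o1 o4 o3 ^+ 2) 0; last exact: classify_U2.
exact: classify_U3.
Qed.

End StandardClassification.

Theorem theorem2p1 (R : realType) (br : 'rV[R]_4 -> 'rV[R]_4 -> 'rV[R]_4)
    (J Rm S : 'M[R]_4) :
  is_lie_bracket br -> unimodular br ->
  gc_triple br J Rm S -> gc_type1 Rm ->
  exists (P : 'M[R]_4) (f : 'I_4 -> 'rV[R]_4) (lam : R),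
    let e1 := row o1 P in let e2 := row o2 P in
    let e3 := row o3 P in let e4 := row o4 P in
    [/\ P \in unitmx /\
        (* f is the dual basis of the basis (e_i) = rows of P *)
        (forall i j, pair (f i) (row j P) = (i == j)%:R),
        (* J = lam (E11 + E22) + E34 - E43 *)
        [/\ e1 *m J = lam *: e1, e2 *m J = lam *: e2,
            e3 *m J = - e4 & e4 *m J = e3],
        (* R = (e1 /\ e2)^# :  R alpha = alpha(e1) e2 - alpha(e2) e1 *)
        (forall alpha, alpha *m Rm = pair alpha e1 *: e2 - pair alpha e2 *: e1),
        (* sigma = (1 + lam^2) (e^1 /\ e^2)_# *)
        (forall u, u *m S =
           (1 + lam ^+ 2) *: (pair (f o1) u *: f o2 - pair (f o2) u *: f o1)) &
        [\/ (* U1 *)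
            exists y q1 q2 : R,
              brackets br e1 e2 e3 e4 e1 0 0
                (2^-1 *: e3 - y *: e4 - q1 *: e1)
                (y *: e3 + 2^-1 *: e4 - q2 *: e1) 0,
            (* U2 *)
            exists y q1 q2 b1 b2 : R,
              brackets br e1 e2 e3 e4 0 0 0
                (- (y *: e4) - q1 *: e1)
                (y *: e3 - q2 *: e1)
                (b1 *: e1 + b2 *: e2)
          | (* U3 : [e4,e1] = p e1 + r e2, [e4,e2] = q e1 - p e2 *)
            exists b1 b2 p q r : R,
              [/\ brackets br e1 e2 e3 e4 0 0
                    (- (p *: e1 + r *: e2)) 0
                    (- (q *: e1 - p *: e2))
                    (b1 *: e1 + b2 *: e2)
                & (`|p ^+ 2 + q * r| == 0) || (`|p ^+ 2 + q * r| == 1)]]].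
Proof.
move=> Hl Hu Hgc Hrank.
have [P [l [HP PJ PR PS]]] := normal_form Hgc Hrank.
have H : gc_lie br J Rm S by split => //; case: Hgc.
have := gc_lie_transport HP H; rewrite PJ PR PS; case=> Hl' HN' Hu'.
apply: (classified_transport HP); rewrite PJ PR PS.
exact: classify_std.
Qed.
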